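(* Let $p$ be a prime, $m,t\ge 1$, $B=\mathrm{GF}(p^m)$ and $F=\mathrm{GF}(p^{mt})$, and assume that $t$ is divisible by $p$ (the characteristic of $F$). Let $n=|F|=|B|^t$, $k=n(1-1/|B|)$, and let $\mathcal{C}=\mathrm{RS}(F,k)=\{(f(\alpha))_{\alpha\in F} : f\in F[x],\ \deg f\le k-1\}$, where the symbol $f(\alpha)$ is stored at the node indexed by $\alpha$. Let $K=\ker(\mathrm{Tr}_{F/B})$. Suppose $f(\alpha^* )$, $f(\overline{\alpha})$, $f(\alpha')$ are three erased symbols, with $\alpha^*,\overline{\alpha},\alpha'$ distinct, such that $$\left\{\frac{\overline{\alpha}-\alpha^*}{\overline{\alpha}-\alpha'},\ \frac{\alpha'-\overline{\alpha}}{\alpha'-\alpha^*},\ \frac{\alpha^*-\alpha'}{\alpha^*-\overline{\alpha}}\right\}\cap K\neq\varnothing.$$ Then there exists a distributed repair scheme in which all three erased symbols are recovered with a total repair bandwidth of $3(n-1)$ sub-symbols (elements of $B$).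
   Context: Elements of $F$ are called symbols and elements of $B$ sub-symbols. The trace is $\mathrm{Tr}_{F/B}(x)=\sum_{i=0}^{t-1}x^{|B|^i}$. In distributed repair, each erased symbol is reconstructed at its own replacement node; replacement nodes download sub-symbols from surviving nodes (computed from the surviving node's stored symbol) and may exchange sub-symbols among themselves (computed from data they have already obtained). The repair bandwidth is the total number of sub-symbols downloaded by all replacement nodes. *)

From Stdlib Require List.
From mathcomp Require Import all_boot all_order all_algebra all_field.
Set Implicit Arguments. Unset Strict Implicit. Unset Printing Implicit Defensive.
Import GRing.Theory.
Local Open Scope ring_scope.

Section Defs.
Variable F : finFieldType.

(* The subfield B = GF(q) of F (q = |B|): the elements fixed by x |-> x^q. *)
Definition subB (q : nat) : {set F} := [set x : F | x ^+ q == x].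

Definition trace (q t : nat) (x : F) : F := \sum_(i < t) x ^+ (q ^ i).

Definition traceKer (q t : nat) : {set F} := [set x | trace q t x == 0].

Definition RS_codeword (k : nat) (c : F -> F) : Prop :=
  exists f : {poly F}, (size f <= k)%N /\ forall a, c a = f.[a].

Definition erased3 (a1 a2 a3 : F) (i : 'I_3) : F := nth a1 [:: a1; a2; a3] i.

(* A distributed repair scheme for three erased nodes (replacement nodes 0,1,2):
   - dl i a : the list of download functions applied by surviving node a to its
     stored symbol; each produces one sub-symbol sent to replacement node i;
   - xch : the ordered list of exchange messages (sender, receiver, h): the
     sender computes one sub-symbol h(data it has obtained so far) and sends it
     to the receiver;
   - rec i : how replacement node i computes the erased symbol from all the
     data it has obtained. *)
Record drepair := DRepair {
  dl : 'I_3 -> F -> seq (F -> F);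
  xch : seq ('I_3 * 'I_3 * (seq F -> F));
  rec : 'I_3 -> seq F -> F }.

Definition survivors (er : 'I_3 -> F) : seq F :=
  [seq a <- enum F | a \notin [seq er i | i <- enum 'I_3]].

Definition init_know (er : 'I_3 -> F) (S : drepair) (c : F -> F) (i : 'I_3)
  : seq F :=
  flatten [seq [seq g (c a) | g <- dl S i a] | a <- survivors er].

Definition xstep (kn : 'I_3 -> seq F) (x : 'I_3 * 'I_3 * (seq F -> F))
  : 'I_3 -> seq F :=
  fun j => if j == x.1.2 then rcons (kn j) (x.2 (kn x.1.1)) else kn j.

Definition final_know (er : 'I_3 -> F) (S : drepair) (c : F -> F)
  : 'I_3 -> seq F :=
  foldl xstep (init_know er S c) (xch S).

Definition bandwidth (er : 'I_3 -> F) (S : drepair) : nat :=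
  (\sum_(i < 3) \sum_(a <- survivors er) size (dl S i a) + size (xch S))%N.

Definition valid_repair (q k : nat) (er : 'I_3 -> F) (S : drepair) : Prop :=
  [/\ (forall i a g, List.In g (dl S i a) -> forall y, g y \in subB q),
      (forall x, List.In x (xch S) -> forall s, x.2 s \in subB q) &
      (forall c, RS_codeword k c -> forall i,
          rec S i (final_know er S c i) = c (er i))].

End Defs.

(* Replacement node i downloads from every survivor a the sub-symbol Tr (c a / (a - er i)).
   Since the code has dimension k = n - n / q, the Guruswami-Wootters check polynomials
   (degree n / q - 1) give for every u the repair equation
     Tr (u * c (er i)) = - sum_(b != er i) Tr (u * (b - er i)) * Tr (c b / (b - er i)).
   For u = 1 / (er i - er j) the coefficient of the erased position er j is Tr (-1) = 0, as p
   divides t; so node i can compute the sub-symbol Tr (c (er i) / (er i - er j)) wanted by node j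
   once it knows the term of the third erased position er l, and even without it when
   Tr ((er l - er i) / (er i - er j)) = 0.  The kernel condition provides this for both orders
   of one pair x, y: x and y exchange one sub-symbol, each then sends one to the third node h,
   which is fully repaired (the trace form is nondegenerate) and sends one back to each of them.
   This costs 3 (n - 3) downloads and 6 exchanges. *)

From HB Require Import structures.
From Stdlib Require Import ClassicalEpsilon.
From mathcomp Require Import all_boot all_order all_algebra all_field fingroup cyclic.
From mathcomp Require Import ring.
Set Implicit Arguments. Unset Strict Implicit. Unset Printing Implicit Defensive.
Import GRing.Theory.
Local Open Scope ring_scope.

Lemma natr_card_finField (F : finFieldType) : #|F|%:R = 0 :> F.
Proof. by have := expg_cardG (in_setT (1 : F)); rewrite cardsT. Qed.

Lemma exists_expf_neq1 (F : finFieldType) i :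
  (0 < i < #|F|.-1)%N -> exists2 b : F, b != 0 & b ^+ i != 1.
Proof.
case/andP=> i_gt0 lt_i_F; apply/exists_inP; apply: contraLR lt_i_F.
rewrite negb_exists_in => /forall_inP all_roots; rewrite -leqNgt.
have nz_P : ('X^i - 1 : {poly F}) != 0 by rewrite -size_poly_eq0 size_XnsubC.
have roots_P : all (root ('X^i - 1)) (enum [pred b : F | b != 0]).
  apply/allP => b; rewrite mem_enum => /all_roots; rewrite negbK => /eqP b_i.
  by rewrite rootE !hornerE b_i subrr.
have := max_poly_roots nz_P roots_P (enum_uniq _).
by rewrite size_XnsubC // -cardE cardC1 ltnS.
Qed.

Lemma sum_expf_eq0 (F : finFieldType) i : (i < #|F|.-1)%N -> \sum_(a : F) a ^+ i = 0.
Proof.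
case: (posnP i) => [-> _|i_gt0 lt_i_F].
  by under eq_bigr do rewrite expr0; rewrite sumr_const natr_card_finField.
have [b nz_b b_i_neq1] := exists_expf_neq1 (introT andP (conj i_gt0 lt_i_F)).
set S := \sum_(a : F) a ^+ i.
have : S = b ^+ i * S.
  rewrite {1}/S (reindex_inj (mulfI nz_b)) /= mulr_sumr.
  by apply: eq_bigr => a _; rewrite exprMn.
move/eqP; rewrite -subr_eq0 -{1}(mul1r S) -mulrBl mulf_eq0 subr_eq0 eq_sym.
by rewrite (negbTE b_i_neq1) => /eqP.
Qed.

Lemma sum_horner_eq0 (F : finFieldType) (P : {poly F}) :
  (size P <= #|F|.-1)%N -> \sum_(a : F) P.[a] = 0.
Proof.
move=> le_P_F; under eq_bigr do rewrite horner_coef.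
rewrite exchange_big big1 // => i _.
by rewrite -mulr_sumr sum_expf_eq0 ?mulr0 // (leq_trans (ltn_ord i)).
Qed.

Lemma RS_codewordB (F : finFieldType) k (c c' : F -> F) :
  RS_codeword k c -> RS_codeword k c' ->
  exists2 d : {poly F}, (size d <= k)%N & forall a, d.[a] = c a - c' a.
Proof.
move=> [f [size_f cf]] [f' [size_f' cf']]; exists (f - f').
  by apply: leq_trans (size_polyD _ _) _; rewrite size_polyN geq_max size_f size_f'.
by move=> a; rewrite hornerD hornerN cf cf'.
Qed.

Lemma size_survivors (F : finFieldType) (er : 'I_3 -> F) :
  injective er -> (size (survivors er) + 3 = #|F|)%N.
Proof.
move=> er_inj; set E := [seq er i | i <- enum 'I_3].
have uniq_E : uniq E by rewrite map_inj_uniq ?enum_uniq.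
have size_E : size E = 3%N by rewrite size_map size_enum_ord.
rewrite -(cardC (mem E)) addnC (card_uniqP uniq_E) size_E; congr (_ + _)%N.
rewrite cardE /enum_mem size_filter /= size_filter count_filter.
by apply: eq_count => a; rewrite !inE andbT.
Qed.

Lemma survivorsPn (F : finFieldType) (er : 'I_3 -> F) a :
  a \notin survivors er -> exists j, a = er j.
Proof.
rewrite mem_filter mem_enum andbT negbK => /mapP[j _ ->].
by exists j.
Qed.

Lemma ord3_other (i j l r : 'I_3) :
  j != i -> l != i -> j != l -> r != i -> r = j \/ r = l.
Proof.
by case: i j l r => [[|[|[|?]]] ?] [[|[|[|?]]] ?] [[|[|[|?]]] ?] [[|[|[|?]]] ?] //= *;
  first [left; exact: val_inj | right; exact: val_inj].
Qed.

(* A node holding the data kn outputs V of any codeword consistent with kn; this choice is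
   irrelevant as soon as the data K determines V. *)
Section Decoder.
Variables (C T U : Type) (c0 : C) (P : C -> Prop).

Definition determines (K : C -> T) (V : C -> U) : Prop :=
  forall c c', P c -> P c' -> K c = K c' -> V c = V c'.

Definition decode (K : C -> T) (V : C -> U) (kn : T) : U :=
  V (epsilon (inhabits c0) (fun c => P c /\ K c = kn)).

Lemma decodeE K V c : determines K V -> P c -> decode K V (K c) = V c.
Proof.
move=> detKV Pc.
have [Pc' Kc'] := epsilon_spec (inhabits c0) (fun c' => P c' /\ K c' = K c)
  (ex_intro _ c (conj Pc erefl)).
exact: detKV Pc' Pc Kc'.
Qed.

End Decoder.

Lemma determines_rcons (C X U : Type) (P : C -> Prop) (K : C -> seq X) (W : C -> X)
    (V : C -> U) :
  determines P K V -> determines P (fun c => rcons (K c) (W c)) V.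
Proof. by move=> detKV c c' Pc Pc' /rcons_inj[Kcc' _]; apply: detKV. Qed.

Section Trace.
Variables (F : finFieldType) (q t : nat).
Hypotheses (q_pchar : [pchar F].-nat q) (card_F : #|F| = (q ^ t)%N) (t_gt0 : (0 < t)%N).

Local Notation Tr := (@trace F q t).
Local Notation k := (#|F| - #|F| %/ q)%N.

Lemma trace1 : Tr 1 = t%:R.
Proof. by rewrite /trace; under eq_bigr do rewrite expr1n; rewrite sumr_const card_ord. Qed.

Lemma q_gt1 : (1 < q)%N.
Proof.
have := finNzRing_gt1 F; rewrite card_F.
by case: q => [|[|//]]; rewrite ?exp0n ?exp1n.
Qed.

Lemma expn_q_gt0 e : (0 < q ^ e)%N.
Proof. by rewrite expn_gt0 ltnW ?q_gt1. Qed.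

Lemma exprD_qpow (x y : F) e : (x + y) ^+ (q ^ e) = x ^+ (q ^ e) + y ^+ (q ^ e).
Proof. by apply: exprDn_pchar; rewrite pnatX q_pchar. Qed.

Lemma expr0_qpow e : (0 : F) ^+ (q ^ e) = 0.
Proof. by rewrite expr0n eqn0Ngt expn_q_gt0. Qed.

Lemma trace0 : Tr 0 = 0.
Proof. by apply: big1 => i _; rewrite expr0_qpow. Qed.

Lemma traceD x y : Tr (x + y) = Tr x + Tr y.
Proof. by rewrite /trace -big_split; apply: eq_bigr => i _; rewrite exprD_qpow. Qed.

HB.instance Definition _ :=
  GRing.isNmodMorphism.Build F F Tr (conj trace0 traceD).

Lemma expr_qpow_subB b e : b \in subB F q -> b ^+ (q ^ e) = b.
Proof. by rewrite inE => /eqP b_q; elim: e => // e IHe; rewrite expnSr exprM IHe. Qed.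

Lemma traceZ b x : b \in subB F q -> Tr (b * x) = b * Tr x.
Proof.
move=> Bb; rewrite /trace mulr_sumr; apply: eq_bigr => i _.
by rewrite exprMn expr_qpow_subB.
Qed.

(* Raising to the power q shifts the summands of the trace cyclically, as x ^+ (q ^ t) = x. *)
Lemma trace_subB x : Tr x \in subB F q.
Proof.
rewrite inE /trace -{2}(expn1 q).
rewrite (big_morph (fun y : F => y ^+ (q ^ 1)) (fun y z => exprD_qpow y z 1) (expr0_qpow 1)).
under eq_bigr do rewrite -exprM -expnD addn1.
have x_qt : x ^+ (q ^ t) = x by rewrite -card_F expf_card.
move: x_qt; case: t t_gt0 => // t' _ x_qt.
by rewrite big_ord_recr big_ord_recl /= expn0 expr1 x_qt addrC.
Qed.

Lemma expn_q_le_pred i : (i < t)%N -> (q ^ i <= q ^ t.-1)%N.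
Proof. by move=> lt_i_t; rewrite leq_exp2l ?q_gt1 // -ltnS prednK. Qed.

Lemma card_divn_q : (#|F| %/ q = q ^ t.-1)%N.
Proof. by rewrite card_F -(prednK t_gt0) expnSr mulnK // ltnW ?q_gt1. Qed.

Lemma trace_poly_coef1 : (\sum_(i < t) 'X^(q ^ i) : {poly F})`_1 = 1.
Proof.
rewrite coef_sum -(prednK t_gt0) big_ord_recl /= expn0 coefXn eqxx big1 ?addr0 //.
move=> i _; rewrite coefXn eqn_leq andbC leqNgt.
by rewrite -{1}(expn0 q) ltn_exp2l ?q_gt1.
Qed.

(* The trace is a polynomial function of degree q ^ (t - 1) < #|F|, hence not identically 0. *)
Lemma trace_nondegenerate x : (forall u, Tr (u * x) = 0) -> x = 0.
Proof.
have [// | nz_x Tr_x0] := eqVneq x 0.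
have Tr_eq0 v : Tr v = 0 by rewrite -(divfK nz_x v) Tr_x0.
pose P : {poly F} := \sum_(i < t) 'X^(q ^ i).
have nz_P : P != 0.
  by apply: contra_neq (@oner_neq0 F) => P0; rewrite -trace_poly_coef1 -/P P0 coef0.
have roots_P : all (root P) (enum F).
  apply/allP => v _; apply/rootP; rewrite /P horner_sum -[RHS](Tr_eq0 v).
  by apply: eq_bigr => i _; rewrite hornerXn.
have size_P : (size P <= (q ^ t.-1).+1)%N.
  apply: leq_trans (size_sum _ _ _) _; apply/bigmax_leqP => i _.
  by rewrite size_polyXn ltnS expn_q_le_pred.
have := max_poly_roots nz_P roots_P (enum_uniq _); rewrite -cardE card_F.
move=> /leq_trans/(_ size_P); rewrite ltnS leq_exp2l ?q_gt1 //.
by rewrite -[X in (X <= _)%N](prednK t_gt0) ltnn.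
Qed.

(* On F \ {a}, check_poly a u is the function b |-> Tr (u * (b - a)) / (b - a). *)
Definition check_poly (a u : F) : {poly F} :=
  \sum_(i < t) u ^+ (q ^ i) *: ('X - a%:P) ^+ (q ^ i).-1.

Lemma size_check_poly a u : (size (check_poly a u) <= q ^ t.-1)%N.
Proof.
apply: leq_trans (size_sum _ _ _) _; apply/bigmax_leqP => i _.
apply: leq_trans (size_scale_leq _ _) _.
by rewrite size_exp_XsubC prednK ?expn_q_gt0 // expn_q_le_pred.
Qed.

Lemma check_poly_at_root a u : (check_poly a u).[a] = u.
Proof.
rewrite horner_sum -(prednK t_gt0) big_ord_recl /= expn0 hornerZ expr0 hornerC mulr1.
rewrite big1 ?addr0 // => i _; rewrite hornerZ horner_exp hornerXsubC subrr expr0n.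
have : (1 < q ^ bump 0 i)%N by rewrite -{1}(expn0 q) ltn_exp2l ?q_gt1.
by case: (q ^ bump 0 i)%N => [|[|e]] //= _; rewrite mulr0.
Qed.

Lemma horner_check_poly a u b :
  b != a -> (check_poly a u).[b] = Tr (u * (b - a)) / (b - a).
Proof.
rewrite -subr_eq0 => nz_ba; rewrite horner_sum /trace mulr_suml.
apply: eq_bigr => i _; rewrite hornerZ horner_exp hornerXsubC.
have := expn_q_gt0 i; case: (q ^ i)%N => // e _ /=.
by rewrite exprMn [(b - a) ^+ e.+1]exprSr mulrA mulfK.
Qed.

(* Guruswami-Wootters: d * check_poly a u has degree < #|F| - 1, so its values sum to 0. *)
Lemma trace_repair_identity (d : {poly F}) a u : (size d <= k)%N ->
  Tr (u * d.[a]) = - \sum_(b | b != a) Tr (u * (b - a)) * Tr (d.[b] / (b - a)).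
Proof.
rewrite card_divn_q => size_d.
have le_qF : (q ^ t.-1 <= #|F|)%N by rewrite card_F leq_exp2l ?q_gt1 ?leq_pred.
have size_dg : (size (d * check_poly a u)%R <= #|F|.-1)%N.
  apply: leq_trans (size_polyMleq _ _) _; rewrite -!subn1 leq_sub2r //.
  by rewrite -(subnK le_qF) leq_add ?size_check_poly.
have := sum_horner_eq0 size_dg; rewrite (bigD1 a) //= hornerM check_poly_at_root.
move=> /(congr1 Tr); rewrite raddf0 raddfD raddf_sum => /eqP.
rewrite addr_eq0 mulrC => /eqP ->; congr (- _); apply: eq_bigr => b ne_ba.
rewrite hornerM horner_check_poly // mulrCA.
exact: traceZ (trace_subB _).
Qed.

Lemma trace_repair_eq0 (d : {poly F}) a u : (size d <= k)%N ->
  (forall b, b != a -> Tr (u * (b - a)) = 0 \/ Tr (d.[b] / (b - a)) = 0) ->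
  Tr (u * d.[a]) = 0.
Proof.
move=> size_d vanish; rewrite trace_repair_identity // big1 ?oppr0 // => b ne_ba.
by have [->|->] := vanish b ne_ba; rewrite ?mul0r ?mulr0.
Qed.

Section Erasures.
Variable er : 'I_3 -> F.
Hypothesis er_inj : injective er.
Hypothesis t_eq0 : t%:R = 0 :> F.

Local Notation RS := (@RS_codeword F k).
Local Notation determinesRS := (determines RS).

Definition download (i : 'I_3) (a v : F) : F := Tr (v / (a - er i)).
Definition dl_know (i : 'I_3) (c : F -> F) : seq F :=
  [seq download i a (c a) | a <- survivors er].
Definition msg (i j : 'I_3) (c : F -> F) : F := download i (er j) (c (er j)).
Definition know1 (i j : 'I_3) (c : F -> F) : seq F := rcons (dl_know i c) (msg i j c).
Definition know2 (i j l : 'I_3) (c : F -> F) : seq F := rcons (know1 i j c) (msg i l c).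

Lemma dl_know_determines_trace i u c c' : RS c -> RS c' ->
  dl_know i c = dl_know i c' ->
  (forall j, j != i -> Tr (u * (er j - er i)) = 0 \/ msg i j c = msg i j c') ->
  Tr (u * c (er i)) = Tr (u * c' (er i)).
Proof.
move=> RSc RSc' /eq_in_map same_dl same_msg; apply/eqP; rewrite -subr_eq0.
have [d size_d cc'] := RS_codewordB RSc RSc'.
rewrite -raddfB -mulrBr -cc'; apply/eqP/trace_repair_eq0 => // b ne_b.
have diff0 : Tr (c b / (b - er i)) = Tr (c' b / (b - er i)) -> Tr (d.[b] / (b - er i)) = 0.
  by rewrite cc' mulrBl raddfB /= => ->; rewrite subrr.
case: (boolP (b \in survivors er)) => [surv_b | /survivorsPn[j b_j]].
  by right; apply/diff0/same_dl.
subst b; have ne_ji : j != i by apply: contra_neq ne_b => ->.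
by have [|/diff0] := same_msg j ne_ji; [left | right].
Qed.

Lemma er_subr_neq0 i j : i != j -> er i - er j != 0.
Proof. by rewrite subr_eq0 (inj_eq er_inj). Qed.

Lemma traceN1 : Tr (-1) = 0.
Proof. by rewrite raddfN /= trace1 t_eq0 oppr0. Qed.

Lemma know2_determines_symbol i j l : j != i -> l != i -> j != l ->
  determinesRS (know2 i j l) (fun c => c (er i)).
Proof.
move=> ne_ji ne_li ne_jl c c' RSc RSc' /rcons_inj[/rcons_inj[same_dl same_j] same_l].
apply/eqP; rewrite -subr_eq0; apply/eqP/trace_nondegenerate => u.
rewrite mulrBr raddfB /= (dl_know_determines_trace RSc RSc' same_dl) ?subrr // => r ne_ri.
by right; have [->|->] := ord3_other ne_ji ne_li ne_jl ne_ri.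
Qed.

Lemma know2_determines_msg i j l r : j != i -> l != i -> j != l ->
  determinesRS (know2 i j l) (msg r i).
Proof.
move=> ne_ji ne_li ne_jl c c' RSc RSc' same.
by rewrite /msg (know2_determines_symbol ne_ji ne_li ne_jl RSc RSc' same).
Qed.

Lemma msg_determined i j l c c' : j != i -> l != i -> j != l -> RS c -> RS c' ->
  dl_know i c = dl_know i c' ->
  Tr ((er l - er i) / (er i - er j)) = 0 \/ msg i l c = msg i l c' ->
  msg j i c = msg j i c'.
Proof.
move=> ne_ji ne_li ne_jl RSc RSc' same_dl msg_l.
rewrite /msg /download mulrC [c' _ / _]mulrC.
apply: (dl_know_determines_trace RSc RSc' same_dl) => r ne_ri.
have [->|->] := ord3_other ne_ji ne_li ne_jl ne_ri; last by rewrite mulrC.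
by left; rewrite -[er j - er i]opprB mulrN mulVf ?traceN1 // er_subr_neq0 // eq_sym.
Qed.

Lemma know1_determines_msg i j l : j != i -> l != i -> j != l ->
  determinesRS (know1 i l) (msg j i).
Proof.
move=> ne_ji ne_li ne_jl c c' RSc RSc' /rcons_inj[same_dl same_l].
by apply: msg_determined ne_ji ne_li ne_jl RSc RSc' same_dl _; right.
Qed.

Lemma dl_know_determines_msg i j l : j != i -> l != i -> j != l ->
  Tr ((er l - er i) / (er i - er j)) = 0 -> determinesRS (dl_know i) (msg j i).
Proof.
move=> ne_ji ne_li ne_jl cond c c' RSc RSc' same_dl.
by apply: msg_determined ne_ji ne_li ne_jl RSc RSc' same_dl _; left.
Qed.

Section Scheme.
Variables h x y : 'I_3.
Hypotheses (ne_xh : x != h) (ne_yh : y != h) (ne_xy : x != y).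
Hypothesis helper_cond : (er x - er h) / (er x - er y) \in traceKer F q t.

Let ne_hx : h != x. Proof. by rewrite eq_sym. Qed.
Let ne_hy : h != y. Proof. by rewrite eq_sym. Qed.
Let ne_yx : y != x. Proof. by rewrite eq_sym. Qed.

Local Notation decodeRS := (decode (fun _ : F => 0) RS).

Lemma helper_trace_x : Tr ((er h - er x) / (er x - er y)) = 0.
Proof.
move: helper_cond; rewrite inE => /eqP cond.
by rewrite -opprB mulNr raddfN /= cond oppr0.
Qed.

Lemma helper_trace_y : Tr ((er h - er y) / (er y - er x)) = 0.
Proof.
move: helper_cond; rewrite inE => /eqP cond.
have -> : (er h - er y) / (er y - er x) = (er x - er h) / (er x - er y) - 1.
  by field; rewrite !er_subr_neq0 // eq_sym.
by rewrite raddfB /= cond trace1 t_eq0 subrr.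
Qed.

Definition final_know_of (i : 'I_3) : (F -> F) -> seq F :=
  if i == h then know2 h x y else if i == x then know2 x y h else know2 y x h.

Definition repair_scheme : drepair F := DRepair
  (fun i a => [:: download i a])
  [:: (x, y, decodeRS (dl_know x) (msg y x));
      (y, x, decodeRS (know1 y x) (msg x y));
      (x, h, decodeRS (know1 x y) (msg h x));
      (y, h, decodeRS (know1 y x) (msg h y));
      (h, x, decodeRS (know2 h x y) (msg x h));
      (h, y, decodeRS (know2 h x y) (msg y h))]
  (fun i => decodeRS (final_know_of i) (fun c => c (er i))).

Lemma init_know_scheme c i : init_know er repair_scheme c i = dl_know i c.
Proof. by rewrite /init_know /dl_know /=; elim: (survivors er) => //= a s ->. Qed.

Lemma final_know_scheme c i : RS c -> final_know er repair_scheme c i = final_know_of i c.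
Proof.
move=> RSc; have det_yx := dl_know_determines_msg ne_yx ne_hx ne_yh helper_trace_x.
have det_xy := determines_rcons (W := msg y x)
  (dl_know_determines_msg ne_xy ne_hy ne_xh helper_trace_y).
have det_hx := know1_determines_msg ne_hx ne_yx ne_hy.
have det_hy := know1_determines_msg ne_hy ne_xy ne_hx.
have det_xh := know2_determines_msg x ne_xh ne_yh ne_xy.
have det_yh := know2_determines_msg y ne_xh ne_yh ne_xy.
rewrite /final_know /= /xstep /= !init_know_scheme /final_know_of.
have [->|/(ord3_other ne_xh ne_yh ne_xy)[]->] := eqVneq i h;
  rewrite ?eqxx ?(negbTE ne_xh, negbTE ne_yh, negbTE ne_xy) /=;
  rewrite ?(negbTE ne_hx, negbTE ne_hy, negbTE ne_yx) /=.
all: rewrite ?(decodeE _ det_yx RSc) ?(decodeE _ det_xy RSc) ?(decodeE _ det_hx RSc).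
all: by rewrite ?(decodeE _ det_hy RSc) ?(decodeE _ det_xh RSc) ?(decodeE _ det_yh RSc).
Qed.

Lemma final_know_of_determines i : determinesRS (final_know_of i) (fun c => c (er i)).
Proof.
rewrite /final_know_of; have [->|/(ord3_other ne_xh ne_yh ne_xy)[]->] := eqVneq i h;
  rewrite ?eqxx ?(negbTE ne_xh, negbTE ne_yh, negbTE ne_yx).
- exact: know2_determines_symbol ne_xh ne_yh ne_xy.
- exact: know2_determines_symbol ne_yx ne_hx ne_yh.
- exact: know2_determines_symbol ne_xy ne_hy ne_xh.
Qed.

Lemma repair_scheme_valid : valid_repair q k er repair_scheme.
Proof.
split.
- by move=> i a g /= [<-|[]] v; exact: trace_subB.
- by move=> e /=; do 6 (case=> [<- s|]; first exact: trace_subB).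
- move=> c RSc i; rewrite /= final_know_scheme //.
  by rewrite (decodeE _ (@final_know_of_determines i) RSc).
Qed.

Lemma bandwidth_repair_scheme : bandwidth er repair_scheme = (3 * (#|F| - 1))%N.
Proof.
rewrite /bandwidth /= -(size_survivors er_inj).
under eq_bigr do rewrite sum1_size.
by rewrite sum_nat_const card_ord -addnBA // mulnDr.
Qed.

Lemma exists_repair_scheme : exists S : drepair F,
  valid_repair q k er S /\ bandwidth er S = (3 * (#|F| - 1))%N.
Proof.
by exists repair_scheme; split; [exact: repair_scheme_valid | exact: bandwidth_repair_scheme].
Qed.

End Scheme.
End Erasures.
End Trace.

Lemma erased3_inj (F : finFieldType) (a1 a2 a3 : F) :
  a1 != a2 -> a1 != a3 -> a2 != a3 -> injective (erased3 a1 a2 a3).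
Proof.
move=> ne12 ne13 ne23 [[|[|[|?]]] ?] [[|[|[|?]]] ?] //; rewrite /erased3 /= => e;
  first [exact: val_inj | by move: ne12 ne13 ne23; rewrite e eqxx].
Qed.

Theorem theorem5 (p m t : nat) (F : finFieldType)
  (hp : prime p) (hm : (0 < m)%N) (ht : (0 < t)%N) (hpt : (p %| t)%N)
  (hF : #|F| = (p ^ (m * t))%N)
  (a1 a2 a3 : F) (h12 : a1 != a2) (h13 : a1 != a3) (h23 : a2 != a3)
  (hK : ((a2 - a1) / (a2 - a3) \in traceKer F (p ^ m) t) \/
        ((a3 - a2) / (a3 - a1) \in traceKer F (p ^ m) t) \/
        ((a1 - a3) / (a1 - a2) \in traceKer F (p ^ m) t)) :
  let n := #|F| in
  let k := (n - n %/ p ^ m)%N in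
  exists S : drepair F,
    valid_repair (p ^ m) k (erased3 a1 a2 a3) S /\
    bandwidth (erased3 a1 a2 a3) S = (3 * (n - 1))%N.
Proof.
move=> n k.
have pchar_p : p \in [pchar F] := card_finPcharP hF hp.
have q_pchar : [pchar F].-nat (p ^ m)%N by rewrite pnatX (pnatE _ hp) pchar_p.
have card_F : #|F| = ((p ^ m) ^ t)%N by rewrite hF expnM.
have t_eq0 : t%:R = 0 :> F.
  by case/dvdnP: hpt => s ->; rewrite natrM (pcharf0 pchar_p) mulr0.
have scheme := exists_repair_scheme q_pchar card_F ht (erased3_inj h12 h13 h23) t_eq0.
by case: hK => [|[]] cond;
  [apply: (scheme 0 1 2) | apply: (scheme 1 2 0) | apply: (scheme 2 0 1)].
Qed.
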